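(* Let $\mathcal{H}$ be a complex Hilbert space and $B,C\in\mathcal{B}(\mathcal{H})$. Then $$w^2\left(\begin{bmatrix}0 & B\\ C & 0\end{bmatrix}\right)\ge \frac14\max\left\{\big\||B|^2+|C^*|^2\big\|,\ \big\||B^*|^2+|C|^2\big\|\right\}+\frac18\Big|\,\|B+C^*\|^2-\|B-C^*\|^2\,\Big|.$$
   Context: $\mathcal{B}(\mathcal{H})$ is the algebra of bounded linear operators on $\mathcal{H}$ with operator norm $\|\cdot\|$. For $A\in\mathcal{B}(\mathcal{H})$, $A^*$ is the adjoint, $|A|=(A^*A)^{1/2}$, $|A^*|=(AA^* )^{1/2}$, and $w(A)=\sup_{\|x\|=1}|\langle Ax,x\rangle|$ is the numerical radius. The operator matrix $\begin{bmatrix}A&B\\C&D\end{bmatrix}$ acts on $\mathcal{H}\oplus\mathcal{H}$ by $(x_1,x_2)\mapsto(Ax_1+Bx_2,\,Cx_1+Dx_2)$; $0$ denotes the zero operator. *)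

From HB Require Import structures.
From mathcomp Require Import all_boot all_order all_algebra.
From mathcomp Require Import complex.
From mathcomp Require Import classical_sets reals.
Set Implicit Arguments.
Unset Strict Implicit.
Unset Printing Implicit Defensive.
Import Order.TTheory GRing.Theory Num.Theory.
Local Open Scope ring_scope.
Local Open Scope classical_set_scope.

Definition cabs (R : realType) (z : R[i]) : R :=
  Num.sqrt (complex.Re z ^+ 2 + complex.Im z ^+ 2).

Definition is_inner_product (R : realType) (V : lmodType R[i])
    (ip : V -> V -> R[i]) : Prop :=
  [/\ (forall (a : R[i]) (x y z : V), ip (a *: x + y) z = a * ip x z + ip y z),
      (forall x y : V, ip y x = conjc (ip x y)),
      (forall x : V, complex.Im (ip x x) = 0 /\ 0 <= complex.Re (ip x x)) &
      (forall x : V, ip x x = 0 -> x = 0)].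

Definition ipnorm (R : realType) (T : Type) (ip : T -> T -> R[i]) (x : T) : R :=
  Num.sqrt (complex.Re (ip x x)).

Definition ip_complete (R : realType) (V : lmodType R[i])
    (ip : V -> V -> R[i]) : Prop :=
  forall u : nat -> V,
    (forall e : R, 0 < e -> exists N : nat, forall m n : nat,
        (N <= m)%N -> (N <= n)%N -> ipnorm ip (u m - u n) < e) ->
    exists l : V, forall e : R, 0 < e -> exists N : nat, forall n : nat,
        (N <= n)%N -> ipnorm ip (u n - l) < e.

Definition is_hilbert (R : realType) (V : lmodType R[i])
    (ip : V -> V -> R[i]) : Prop :=
  is_inner_product ip /\ ip_complete ip.

Definition bounded_op (R : realType) (V : lmodType R[i])
    (ip : V -> V -> R[i]) (A : {linear V -> V}) : Prop :=
  exists M : R, forall x : V, ipnorm ip (A x) <= M * ipnorm ip x.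

Definition is_adjoint (R : realType) (V : lmodType R[i])
    (ip : V -> V -> R[i]) (A As : V -> V) : Prop :=
  forall x y : V, ip (A x) y = ip x (As y).

Definition opnorm (R : realType) (T : Type) (ip : T -> T -> R[i])
    (A : T -> T) : R :=
  sup [set ipnorm ip (A x) | x in [set x : T | ipnorm ip x <= 1]].

Definition numrad (R : realType) (T : Type) (ip : T -> T -> R[i])
    (A : T -> T) : R :=
  sup [set cabs (ip (A x) x) | x in [set x : T | ipnorm ip x = 1]].

Definition ip_sum (R : realType) (V : Type) (ip : V -> V -> R[i])
    (x y : V * V) : R[i] :=
  ip x.1 y.1 + ip x.2 y.2.

(* the operator matrix [[A, B], [C, D]] acting on H (+) H *)
Definition opmat (V : zmodType) (A B C D : V -> V) (x : V * V) : V * V :=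
  (A x.1 + B x.2, C x.1 + D x.2).

(* Let T = [[0, B], [C, 0]] on H (+) H and w = w(T); Bs, Cs are the adjoints
   of B, C.  Put D+ = B + Cs, D- = B - Cs, a = ||D+|| and b = ||D-||.
   1. <T (y, x), (y, x)> = <B x, y> + <C y, x>, and |<T z, z>| <= w ||z||^2
      by homogeneity.  Evaluating at z = (y, x) and z = (i y, x) bounds
      Re <D+ x, y> and Re <D- x, y> by w (||x||^2 + ||y||^2); choosing the
      length of y optimally yields a <= 2 w and b <= 2 w.
   2. If F, G have adjoints Fs, Gs, ||F + G|| <= al and ||F - G|| <= be, then
      2 <(Fs F + Gs G) x, u> = <(F + G) x, (F + G) u> + <(F - G) x, (F - G) u>
      gives ||Fs F + Gs G|| <= (al^2 + be^2) / 2 (lemma gram_sum_bound).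
      Applied to (F, G) = (B, Cs) and to (F, G) = (Bs, C), where the adjoint
      Bs + C of D+ has norm at most a (and likewise for D-), it bounds both
      ||Bs B + C Cs|| and ||B Bs + Cs C|| by (a^2 + b^2) / 2.
   3. Finally (a^2 + b^2) / 8 + |a^2 - b^2| / 8 = max (a^2, b^2) / 4 <= w^2.
   The file first collects the needed algebra of complex numbers, inner
   products, adjoints and sup-defined operator norms, then proves the two
   estimates, and derives the theorem at the end. *)
From HB Require Import structures.
From mathcomp Require Import all_boot all_order all_algebra.
From mathcomp Require Import complex.
From mathcomp Require Import classical_sets reals.
From mathcomp Require Import lra ring boolp.
Set Implicit Arguments.
Unset Strict Implicit.
Import Order.TTheory GRing.Theory Num.Theory.
Local Open Scope ring_scope.
Local Open Scope complex_scope.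
Local Open Scope classical_set_scope.

Section ComplexParts.
Variable R : realType.
Implicit Types a b : R[i].

Lemma ReD a b : complex.Re (a + b) = complex.Re a + complex.Re b.
Proof. by case: a; case: b. Qed.

Lemma ReN a : complex.Re (- a) = - complex.Re a.
Proof. by case: a. Qed.

Lemma ImN a : complex.Im (- a) = - complex.Im a.
Proof. by case: a. Qed.

Lemma ReMC (k : R) a : complex.Re (k%:C * a) = k * complex.Re a.
Proof. by case: a => x y /=; rewrite mul0r subr0. Qed.

Lemma ImMC (k : R) a : complex.Im (k%:C * a) = k * complex.Im a.
Proof. by case: a => x y /=; rewrite mul0r addr0. Qed.

Lemma ReJ a : complex.Re (conjc a) = complex.Re a.
Proof. by case: a. Qed.

Lemma Re_iM a : complex.Re ('i * a) = - complex.Im a.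
Proof. by case: a => x y /=; rewrite !mul0r !mul1r sub0r. Qed.

Lemma mul_i_conj_i : ('i : R[i]) * conjc 'i = 1.
Proof.
have -> : conjc ('i : R[i]) = - 'i.
  by apply/eqP; rewrite eq_complex /= oppr0 !eqxx.
by rewrite mulrN -expr2 sqr_i opprK.
Qed.

Lemma cabs_ge0 a : 0 <= cabs a.
Proof. exact: sqrtr_ge0. Qed.

Lemma cabs0 : cabs (0 : R[i]) = 0.
Proof. by rewrite /cabs /= expr0n /= addr0 sqrtr0. Qed.

Lemma cabsD a b : cabs (a + b) <= cabs a + cabs b.
Proof.
have cabsE z : cabs z = Normc.normc z by case: z.
by rewrite !cabsE; exact: le_normcD.
Qed.

Lemma cabsMC (k : R) a : cabs (k%:C * a) = `|k| * cabs a.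
Proof.
rewrite /cabs ReMC ImMC !exprMn -mulrDr sqrtrM ?sqr_ge0 //.
by rewrite sqrtr_sqr.
Qed.

Lemma Re_le_cabs a : complex.Re a <= cabs a.
Proof.
rewrite /cabs; apply: le_trans (ler_norm _) _.
by rewrite -sqrtr_sqr; apply: ler_wsqrtr; rewrite lerDl sqr_ge0.
Qed.

Lemma NIm_le_cabs a : - complex.Im a <= cabs a.
Proof.
rewrite /cabs; apply: le_trans (ler_norm _) _.
by rewrite -sqrtr_sqr; apply: ler_wsqrtr; rewrite sqrrN lerDr sqr_ge0.
Qed.

Lemma cabs_le_parts a : cabs a <= `|complex.Re a| + `|complex.Im a|.
Proof.
rewrite /cabs -(ger0_norm (addr_ge0 (normr_ge0 _) (normr_ge0 _))).
rewrite -sqrtr_sqr; apply: ler_wsqrtr.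
rewrite -(real_normK (num_real (complex.Re a))).
rewrite -(real_normK (num_real (complex.Im a))).
have := normr_ge0 (complex.Re a); have := normr_ge0 (complex.Im a); nra.
Qed.
End ComplexParts.

(* If n >= 0 and n^2 <= k n then n <= k: the step "divide by n" used to turn
   quadratic estimates into norm estimates. *)
Lemma le_of_sqr_le_mul (R : realFieldType) (n k : R) :
  0 <= n -> 0 <= k -> n ^+ 2 <= k * n -> n <= k.
Proof.
move=> n0 k0 h; have [->|nz] := eqVneq n 0; first by [].
have gn : 0 < n by rewrite lt_neqAle eq_sym nz.
by rewrite -(ler_pM2r gn) -expr2.
Qed.

Section InnerProduct.
Variable R : realType.
Variable V : lmodType R[i].
Variable ip : V -> V -> R[i].
Hypothesis hip : is_inner_product ip.
Local Notation nrm := (ipnorm ip).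
Implicit Types x y z u v : V.

Lemma ipC x y : ip y x = conjc (ip x y).
Proof. by case: hip. Qed.

Lemma ipDl x y z : ip (x + y) z = ip x z + ip y z.
Proof. by case: hip => ipZD _ _ _; rewrite -[x]scale1r ipZD mul1r scale1r. Qed.

Lemma ip0l z : ip 0 z = 0.
Proof. by apply: (addrI (ip 0 z)); rewrite -ipDl !addr0. Qed.

Lemma ipZl a x z : ip (a *: x) z = a * ip x z.
Proof. by case: hip => ipZD _ _ _; rewrite -[a *: x]addr0 ipZD ip0l addr0. Qed.

Lemma ipNl x z : ip (- x) z = - ip x z.
Proof. by rewrite -scaleN1r ipZl mulN1r. Qed.

Lemma ipDr x y z : ip z (x + y) = ip z x + ip z y.
Proof. by rewrite ipC ipDl rmorphD /= -!ipC. Qed.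

Lemma ipZr a x z : ip z (a *: x) = conjc a * ip z x.
Proof. by rewrite ipC ipZl rmorphM /= -ipC. Qed.

Lemma ip0r z : ip z 0 = 0.
Proof. by rewrite ipC ip0l conjc0. Qed.

Lemma ipNr x z : ip z (- x) = - ip z x.
Proof. by rewrite ipC ipNl rmorphN /= -ipC. Qed.

Lemma ReipC x y : complex.Re (ip y x) = complex.Re (ip x y).
Proof. by rewrite ipC ReJ. Qed.

Lemma nrm_ge0 x : 0 <= nrm x.
Proof. exact: sqrtr_ge0. Qed.

Lemma nrm_sq x : nrm x ^+ 2 = complex.Re (ip x x).
Proof. by case: hip => _ _ /(_ x) [_ ?] _; rewrite sqr_sqrtr. Qed.

Lemma nrm0 : nrm 0 = 0.
Proof. by rewrite /ipnorm ip0l /= sqrtr0. Qed.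

Lemma nrm_eq0 x : nrm x = 0 -> x = 0.
Proof.
move=> h; case: hip => _ _ /(_ x) [ImH _]; apply.
move: (nrm_sq x); rewrite h expr0n /= => ReH.
by case: (ip x x) ReH ImH => p q /= <- ->.
Qed.

Lemma nrmZ (k : R) x : nrm (k%:C *: x) = `|k| * nrm x.
Proof.
rewrite /ipnorm ipZl ipZr conjc_real mulrA -rmorphM /= ReMC.
by rewrite sqrtrM ?sqr_ge0 // -expr2 sqrtr_sqr.
Qed.

Lemma nrm_i x : nrm ('i *: x) = nrm x.
Proof. by rewrite /ipnorm ipZl ipZr mulrA mul_i_conj_i mul1r. Qed.

Lemma nrmN x : nrm (- x) = nrm x.
Proof. by rewrite /ipnorm ipNl ipNr opprK. Qed.

(* Cauchy-Schwarz for the real part: Re <x, y> <= ||x|| ||y||, obtained from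
   0 <= ||(||y|| x - ||x|| y)||^2. *)
Lemma Re_ip_le x y : complex.Re (ip x y) <= nrm x * nrm y.
Proof.
have [hx|hx] := eqVneq (nrm x) 0; first by rewrite (nrm_eq0 hx) ip0l nrm0 mul0r.
have [hy|hy] := eqVneq (nrm y) 0; first by rewrite (nrm_eq0 hy) ip0r nrm0 mulr0.
have gx : 0 < nrm x by rewrite lt_neqAle eq_sym hx nrm_ge0.
have gy : 0 < nrm y by rewrite lt_neqAle eq_sym hy nrm_ge0.
have := nrm_sq ((nrm y)%:C *: x - (nrm x)%:C *: y).
rewrite !(ipDl, ipDr, ipNl, ipNr, ipZl, ipZr) !conjc_real !ReD !ReN.
rewrite !mulrA -!rmorphM /= !ReMC -!nrm_sq (ReipC x y).
set d := nrm (_ - _) => sq.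
have h2 : 0 <= (nrm x * nrm y) * (nrm x * nrm y - complex.Re (ip x y)).
  by have := sqr_ge0 d; nra.
by rewrite pmulr_rge0 ?subr_ge0 ?mulr_gt0 in h2.
Qed.

Lemma abs_Re_ip_le u v : `|complex.Re (ip u v)| <= nrm u * nrm v.
Proof. by rewrite ler_norml Re_ip_le lerNl -ReN -ipNl -(nrmN u) Re_ip_le. Qed.

Lemma abs_Im_ip_le u v : `|complex.Im (ip u v)| <= nrm u * nrm v.
Proof.
rewrite ler_norml; apply/andP; split.
  by rewrite lerNl -Re_iM -ipZl -(nrm_i u) Re_ip_le.
rewrite -[ip u v]opprK -ipNl ImN -Re_iM -ipZl -(nrmN u) -(nrm_i (- u)).
exact: Re_ip_le.
Qed.

(* A crude Cauchy-Schwarz inequality for the modulus, enough to see that the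
   numerical radius is a supremum of a bounded set. *)
Lemma cabs_ip_le u v : cabs (ip u v) <= 2 * (nrm u * nrm v).
Proof.
apply: le_trans (cabs_le_parts _) _.
by rewrite mulr2n mulrDl mul1r lerD ?abs_Re_ip_le ?abs_Im_ip_le.
Qed.

Lemma ip_ext a b : (forall v, ip v a = ip v b) -> a = b.
Proof.
move=> h; apply/eqP; rewrite -subr_eq0; apply/eqP.
by case: hip => _ _ _; apply; rewrite ipDr ipNr h subrr.
Qed.
End InnerProduct.

Section Adjoints.
Variable R : realType.
Variable V : lmodType R[i].
Variable ip : V -> V -> R[i].
Hypothesis hip : is_inner_product ip.
Implicit Types F Fs G Gs : V -> V.

Lemma adjoint_sym F Fs : is_adjoint ip F Fs -> is_adjoint ip Fs F.
Proof. by move=> h x y; rewrite (ipC hip) -h -(ipC hip). Qed.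

Lemma adjointD F Fs G Gs : is_adjoint ip F Fs -> is_adjoint ip G Gs ->
  is_adjoint ip (fun x => F x + G x) (fun x => Fs x + Gs x).
Proof. by move=> hF hG x y; rewrite (ipDl hip) (ipDr hip) hF hG. Qed.

Lemma adjointB F Fs G Gs : is_adjoint ip F Fs -> is_adjoint ip G Gs ->
  is_adjoint ip (fun x => F x - G x) (fun x => Fs x - Gs x).
Proof. by move=> hF hG x y; rewrite (ipDl hip) (ipDr hip) (ipNl hip) (ipNr hip) hF hG. Qed.

Lemma adjointZ F Fs : is_adjoint ip F Fs -> scalable Fs.
Proof. by move=> h k x; apply: (ip_ext hip) => v; rewrite -h !(ipZr hip) h. Qed.

Lemma adjoint0 F Fs : is_adjoint ip F Fs -> Fs 0 = 0.
Proof. by move=> h; have := adjointZ h 0 0; rewrite !scale0r. Qed.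
End Adjoints.

Section NormEstimates.
Variable R : realType.
Variable V : lmodType R[i].
Variable ip : V -> V -> R[i].
Hypothesis hip : is_inner_product ip.
Local Notation nrm := (ipnorm ip).

Lemma cabs_ip_unit_le (F : V -> V) (M : R) (a b : V) : 0 <= M ->
  (forall x, nrm (F x) <= M * nrm x) -> nrm a <= 1 -> nrm b <= 1 ->
  cabs (ip (F a) b) <= 2 * M.
Proof.
move=> M0 hF la lb; apply: le_trans (cabs_ip_le hip _ _) _.
rewrite ler_pM2l // -[M]mulr1; apply: ler_pM; rewrite ?nrm_ge0 //.
by apply: le_trans (hF a) _; rewrite ler_piMr.
Qed.

Lemma Re_ip_image_le (H : V -> V) (c : R) :
  (forall v, nrm (H v) <= c * nrm v) ->
  forall x u, complex.Re (ip (H x) (H u)) <= c ^+ 2 * nrm x * nrm u.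
Proof.
move=> hH x u; apply: le_trans (Re_ip_le hip _ _) _.
have := ler_pM (nrm_ge0 _ _) (nrm_ge0 _ _) (hH x) (hH u).
by rewrite -mulrA mulrACA -expr2 mulrA.
Qed.

(* A map whose adjoint is bounded by a is itself bounded by a:
   ||K v||^2 = Re <v, H (K v)> <= ||v|| a ||K v||. *)
Lemma adjoint_norm_le (K H : V -> V) (a : R) :
  is_adjoint ip K H -> 0 <= a -> (forall y, nrm (H y) <= a * nrm y) ->
  forall v, nrm (K v) <= a * nrm v.
Proof.
move=> hK a0 hH v; apply: le_of_sqr_le_mul; rewrite ?mulr_ge0 ?nrm_ge0 //.
rewrite (nrm_sq hip) hK; apply: le_trans (Re_ip_le hip _ _) _.
by rewrite [a * _]mulrC -mulrA; apply: ler_wpM2l; [exact: nrm_ge0 | exact: hH].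
Qed.

(* If Re <u, y> <= w (||y||^2 + ||x||^2) for every y, then ||u|| <= 2 w ||x||:
   take y = (||x|| / ||u||) u. *)
Lemma norm_le_of_Re_le (w : R) (x u : V) : 0 <= w ->
  (forall y, complex.Re (ip u y) <= w * (nrm y ^+ 2 + nrm x ^+ 2)) ->
  (x = 0 -> u = 0) -> nrm u <= 2 * w * nrm x.
Proof.
move=> w0 h h0.
have [nu|nu] := eqVneq (nrm u) 0; first by rewrite nu !mulr_ge0 ?nrm_ge0.
have [nx|nx] := eqVneq (nrm x) 0.
  by move: nu; rewrite (h0 (nrm_eq0 hip nx)) (nrm0 hip) eqxx.
have gu : 0 < nrm u by rewrite lt_neqAle eq_sym nu nrm_ge0.
have gx : 0 < nrm x by rewrite lt_neqAle eq_sym nx nrm_ge0.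
have q0 : 0 <= nrm x / nrm u by rewrite divr_ge0 ?nrm_ge0.
have := h ((nrm x / nrm u)%:C *: u).
rewrite (ipZr hip) conjc_real ReMC -(nrm_sq hip) (nrmZ hip) ger0_norm //.
rewrite expr2 mulrA divfK // => hh.
rewrite -(ler_pM2l gx); apply: le_trans hh _.
by rewrite [X in _ <= X](_ : _ = w * (nrm x ^+ 2 + nrm x ^+ 2)) //; ring.
Qed.

(* The key parallelogram estimate: if ||F + G|| <= al and ||F - G|| <= be,
   then ||Fs F + Gs G|| <= (al^2 + be^2) / 2, because
   2 <(Fs F + Gs G) x, u> = <(F+G) x, (F+G) u> + <(F-G) x, (F-G) u>. *)
Lemma gram_sum_bound (F Fs G Gs : V -> V) (al be : R) :
  is_adjoint ip F Fs -> is_adjoint ip G Gs ->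
  (forall v, nrm (F v + G v) <= al * nrm v) ->
  (forall v, nrm (F v - G v) <= be * nrm v) ->
  forall x, nrm (Fs (F x) + Gs (G x)) <= (al ^+ 2 + be ^+ 2) / 2 * nrm x.
Proof.
move=> hF hG hD hD' x; set u := Fs (F x) + Gs (G x).
have sq : nrm u ^+ 2 = complex.Re (ip (F x) (F u)) + complex.Re (ip (G x) (G u)).
  by rewrite (nrm_sq hip) {1}/u (ipDl hip) ReD !(adjoint_sym hip hF, adjoint_sym hip hG).
have parallelogram : ip (F x + G x) (F u + G u) + ip (F x - G x) (F u - G u) =
    (ip (F x) (F u) + ip (G x) (G u)) *+ 2.
  rewrite !(ipDl hip, ipDr hip, ipNl hip, ipNr hip); ring.
have := congr1 (@complex.Re R) parallelogram.
rewrite mulr2n !ReD -sq => e.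
have k1 := Re_ip_image_le hD x u; have k2 := Re_ip_image_le hD' x u.
have two : nrm u ^+ 2 + nrm u ^+ 2 <= (al ^+ 2 + be ^+ 2) * nrm x * nrm u.
  by rewrite -e !mulrDl; exact: lerD.
apply: le_of_sqr_le_mul; first exact: nrm_ge0.
  by rewrite mulr_ge0 ?nrm_ge0 // divr_ge0 ?addr_ge0 ?sqr_ge0.
have -> : (al ^+ 2 + be ^+ 2) / 2 * nrm x * nrm u =
    (al ^+ 2 + be ^+ 2) * nrm x * nrm u / 2 by ring.
by rewrite ler_pdivlMr // mulrC mulr_natl mulr2n.
Qed.
End NormEstimates.

Section OperatorNorm.
Variable R : realType.
Variable V : lmodType R[i].
Variable ip : V -> V -> R[i].
Hypothesis hip : is_inner_product ip.
Local Notation nrm := (ipnorm ip).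
Variables (f : V -> V) (c : R).
Hypothesis f_scalable : scalable f.
Hypothesis c_ge0 : 0 <= c.
Hypothesis f_bounded : forall x, nrm (f x) <= c * nrm x.

Local Notation unit_image := [set nrm (f x) | x in [set x | nrm x <= 1]].

Lemma unit_image_le_c : ubound unit_image c.
Proof. by move=> _ [x /= x1 <-]; apply: le_trans (f_bounded x) _; rewrite ler_piMr. Qed.

Lemma unit_image0 : unit_image (nrm (f 0)).
Proof. by exists 0 => //=; rewrite (nrm0 hip) ler01. Qed.

Lemma unit_image_has_sup : has_sup unit_image.
Proof. by split; [exists (nrm (f 0)); exact: unit_image0 | exists c; exact: unit_image_le_c]. Qed.

Lemma opnorm_le : opnorm ip f <= c.
Proof. by apply: ge_sup; [exists (nrm (f 0)); exact: unit_image0 | exact: unit_image_le_c]. Qed.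

Lemma opnorm_ge0 : 0 <= opnorm ip f.
Proof. exact: le_trans (nrm_ge0 _ _) (sup_upper_bound unit_image_has_sup unit_image0). Qed.

(* ||f x|| <= ||f|| ||x||, by evaluating the supremum at x / ||x||. *)
Lemma opnorm_bound x : nrm (f x) <= opnorm ip f * nrm x.
Proof.
have [nx|nx] := eqVneq (nrm x) 0.
  have f0 : f 0 = 0 by have := f_scalable 0 0; rewrite !scale0r.
  by rewrite (nrm_eq0 hip nx) f0 (nrm0 hip) mulr0.
have gx : 0 < nrm x by rewrite lt_neqAle eq_sym nx nrm_ge0.
have k0 : 0 <= (nrm x)^-1 by rewrite invr_ge0 nrm_ge0.
have : unit_image (nrm (f ((nrm x)^-1%:C *: x))).
  by exists ((nrm x)^-1%:C *: x); rewrite //= (nrmZ hip) ger0_norm // mulVf.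
move/(sup_upper_bound unit_image_has_sup).
by rewrite f_scalable (nrmZ hip) ger0_norm // mulrC ler_pdivrMr.
Qed.
End OperatorNorm.

Lemma bounded_op_ge0 (R : realType) (V : lmodType R[i]) (ip : V -> V -> R[i])
    (F : {linear V -> V}) : bounded_op ip F ->
  exists2 M : R, 0 <= M & forall x, ipnorm ip (F x) <= M * ipnorm ip x.
Proof.
case=> M hM; exists `|M| => // x; apply: le_trans (hM x) _.
by rewrite ler_wpM2r ?ler_norm // sqrtr_ge0.
Qed.

Lemma ipnorm_sum_sq (R : realType) (V : lmodType R[i]) (ip : V -> V -> R[i])
    (hip : is_inner_product ip) (z : V * V) :
  ipnorm (ip_sum ip) z ^+ 2 = ipnorm ip z.1 ^+ 2 + ipnorm ip z.2 ^+ 2.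
Proof.
have ge0 v : 0 <= complex.Re (ip v v) by rewrite -(nrm_sq hip) sqr_ge0.
by rewrite /ipnorm /ip_sum ReD !sqr_sqrtr ?addr_ge0 ?ge0.
Qed.

Section NumericalRadius.
Variable R : realType.
Variable V : lmodType R[i].
Variable ip : V -> V -> R[i].
Hypothesis hip : is_inner_product ip.
Variables (B C : {linear V -> V}) (Cs : V -> V) (MB MC : R).
Hypothesis hCs : is_adjoint ip C Cs.
Hypotheses (MB_ge0 : 0 <= MB) (MC_ge0 : 0 <= MC).
Hypothesis hMB : forall x, ipnorm ip (B x) <= MB * ipnorm ip x.
Hypothesis hMC : forall x, ipnorm ip (C x) <= MC * ipnorm ip x.
Local Notation nrm := (ipnorm ip).
Local Notation nsum := (ipnorm (ip_sum ip)).
Local Notation T := (opmat (fun=> 0) B C (fun=> 0)).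
Local Notation w := (numrad (ip_sum ip) T).

Lemma offdiag_form (z : V * V) :
  ip_sum ip (T z) z = ip (B z.2) z.1 + ip (C z.1) z.2.
Proof. by rewrite /ip_sum /opmat /= add0r addr0. Qed.

(* The set whose supremum is w is bounded above, by 2 MB + 2 MC. *)
Lemma form_le_numrad (z : V * V) : nsum z = 1 -> cabs (ip_sum ip (T z) z) <= w.
Proof.
move=> z1; apply: sup_upper_bound; last by exists z.
split; first by exists (cabs (ip_sum ip (T z) z)); exists z.
exists (2 * MB + 2 * MC) => _ [v /= hv <-].
have := ipnorm_sum_sq hip v; rewrite hv expr1n => hs.
have g1 := nrm_ge0 ip v.1; have g2 := nrm_ge0 ip v.2.
have l1 : nrm v.1 <= 1 by nra.
have l2 : nrm v.2 <= 1 by nra.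
rewrite offdiag_form; apply: le_trans (cabsD _ _) _.
by apply: lerD; apply: (cabs_ip_unit_le hip).
Qed.

Lemma numrad_ge0 : 0 <= w.
Proof.
case: (pselect (exists z, nsum z = 1)) => [[z hz]|nz].
  exact: le_trans (cabs_ge0 _) (form_le_numrad hz).
rewrite /numrad (_ : [set _ | _ in _] = set0) ?sup0 //.
by apply/seteqP; split=> [e [z hz _]|]; [apply: nz; exists z | exact: sub0set].
Qed.

Lemma form_le_numrad_sqr (z : V * V) : cabs (ip_sum ip (T z) z) <= w * nsum z ^+ 2.
Proof.
have [nz|nz] := eqVneq (nsum z) 0.
  have := ipnorm_sum_sq hip z; rewrite nz expr0n /= => hs.
  have g1 := nrm_ge0 ip z.1; have g2 := nrm_ge0 ip z.2.
  have h1 : nrm z.1 = 0 by nra.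
  have h2 : nrm z.2 = 0 by nra.
  rewrite offdiag_form (nrm_eq0 hip h1) (nrm_eq0 hip h2) !linear0 !(ip0r hip).
  by rewrite addr0 cabs0 mulr_ge0 ?numrad_ge0 ?sqr_ge0.
have gz : 0 < nsum z by rewrite lt_neqAle eq_sym nz sqrtr_ge0.
set k := (nsum z)^-1; have k0 : 0 <= k by rewrite invr_ge0 ltW.
have kz : k * nsum z = 1 by rewrite mulVf.
have hz' : nsum (k%:C *: z.1, k%:C *: z.2) = 1.
  apply/eqP; rewrite -sqrp_eq1 ?sqrtr_ge0 // (ipnorm_sum_sq hip) /= !(nrmZ hip).
  by rewrite ger0_norm // !exprMn -mulrDr -(ipnorm_sum_sq hip) -exprMn kz expr1n.
have h := form_le_numrad hz'.
rewrite !offdiag_form /= !linearZ /= !(ipZl hip, ipZr hip) !conjc_real in h.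
rewrite !mulrA -!rmorphM /= -mulrDr cabsMC ger0_norm ?mulr_ge0 // in h.
have e : nsum z ^+ 2 * (k * k) = 1 by rewrite -expr2 -exprMn mulrC kz expr1n.
have := ler_wpM2r (sqr_ge0 (nsum z)) h.
by rewrite [X in X <= _]mulrC mulrA e mul1r offdiag_form.
Qed.

(* Taking z = (y, x): Re <(B + Cs) x, y> <= w (||y||^2 + ||x||^2). *)
Lemma Re_Dplus_le (x y : V) :
  complex.Re (ip (B x + Cs x) y) <= w * (nrm y ^+ 2 + nrm x ^+ 2).
Proof.
have := form_le_numrad_sqr (y, x); rewrite offdiag_form (ipnorm_sum_sq hip) /=.
rewrite (ipDl hip) ReD (ReipC hip y (Cs x)) -hCs -ReD.
exact: le_trans (Re_le_cabs _).
Qed.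

(* Taking z = (i y, x): Re <(B - Cs) x, y> <= w (||y||^2 + ||x||^2). *)
Lemma Re_Dminus_le (x y : V) :
  complex.Re (ip (B x - Cs x) y) <= w * (nrm y ^+ 2 + nrm x ^+ 2).
Proof.
have := form_le_numrad_sqr ('i *: y, x).
rewrite offdiag_form (ipnorm_sum_sq hip) /= (nrm_i hip) linearZ /= (ipZr hip) (ipZl hip).
rewrite (ipDl hip) (ipNl hip) ReD ReN (ReipC hip y (Cs x)) -hCs -ReN -ReD.
set a := ip (B x) y; set c := ip (C y) x.
have -> : a - c = 'i * (conjc 'i * a + 'i * c).
  by rewrite mulrDr !mulrA mul_i_conj_i mul1r -expr2 sqr_i mulN1r.
by rewrite Re_iM; exact: le_trans (NIm_le_cabs _).
Qed.

Lemma Dplus_le (x : V) : nrm (B x + Cs x) <= 2 * w * nrm x.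
Proof.
apply: (norm_le_of_Re_le hip numrad_ge0 (Re_Dplus_le x)) => ->.
by rewrite linear0 (adjoint0 hip hCs) addr0.
Qed.

Lemma Dminus_le (x : V) : nrm (B x - Cs x) <= 2 * w * nrm x.
Proof.
apply: (norm_le_of_Re_le hip numrad_ge0 (Re_Dminus_le x)) => ->.
by rewrite linear0 (adjoint0 hip hCs) subr0.
Qed.
End NumericalRadius.

(* The closing arithmetic: if 0 <= a, b <= 2 w and M <= (a^2 + b^2) / 2, then
   M / 4 + |a^2 - b^2| / 8 <= max (a^2, b^2) / 4 <= w^2. *)
Lemma quarter_max_bound (R : realFieldType) (a b w M : R) :
  0 <= a -> 0 <= b -> a <= 2 * w -> b <= 2 * w -> M <= (a ^+ 2 + b ^+ 2) / 2 ->
  4^-1 * M + 8^-1 * `|a ^+ 2 - b ^+ 2| <= w ^+ 2.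
Proof.
move=> a0 b0 aw bw hM.
have a2 : a ^+ 2 <= 4 * w ^+ 2 by nra.
have b2 : b ^+ 2 <= 4 * w ^+ 2 by nra.
by have [ab|ab] := lerP (a ^+ 2) (b ^+ 2); lra.
Qed.

Unset Implicit Arguments.
Local Close Scope complex_scope.
Local Close Scope classical_set_scope.

Theorem mainTheorem4 (R : realType) (V : lmodType R[i]) (ip : V -> V -> R[i])
    (HV : is_hilbert ip) (B C : {linear V -> V}) (Bs Cs : V -> V)
    (hB : bounded_op ip B) (hC : bounded_op ip C)
    (hBs : is_adjoint ip B Bs) (hCs : is_adjoint ip C Cs) :
  (numrad (ip_sum ip) (opmat (fun=> 0) B C (fun=> 0))) ^+ 2 >=
    4^-1 * Num.max (opnorm ip (fun x => Bs (B x) + C (Cs x)))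
                   (opnorm ip (fun x => B (Bs x) + Cs (C x)))
  + 8^-1 * `| opnorm ip (fun x => B x + Cs x) ^+ 2
              - opnorm ip (fun x => B x - Cs x) ^+ 2 |.
Proof.
have hip := HV.1.
have [MB MB0 hMB] := bounded_op_ge0 hB; have [MC MC0 hMC] := bounded_op_ge0 hC.
set w := numrad _ _.
have w0 : 0 <= w := numrad_ge0 hip MB0 MC0 hMB hMC.
have w20 : 0 <= 2 * w by rewrite mulr_ge0.
have Dp := Dplus_le hip hCs MB0 MC0 hMB hMC.
have Dm := Dminus_le hip hCs MB0 MC0 hMB hMC.
have sDp : scalable (fun x => B x + Cs x).
  by move=> k x; rewrite linearZ (adjointZ hip hCs) scalerDr.
have sDm : scalable (fun x => B x - Cs x).
  by move=> k x; rewrite linearZ (adjointZ hip hCs) scalerBr.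
set a := opnorm ip (fun x => B x + Cs x); set b := opnorm ip (fun x => B x - Cs x).
have ha := opnorm_bound hip sDp w20 Dp; have hb := opnorm_bound hip sDm w20 Dm.
have a0 : 0 <= a := opnorm_ge0 hip w20 Dp.
have b0 : 0 <= b := opnorm_ge0 hip w20 Dm.
(* Step 2: the adjoints Bs + C and Bs - C satisfy the same bounds, and the
   parallelogram estimate bounds both Bs B + C Cs and B Bs + Cs C. *)
have ha' := adjoint_norm_le hip (adjointD hip (adjoint_sym hip hBs) hCs) a0 ha.
have hb' := adjoint_norm_le hip (adjointB hip (adjoint_sym hip hBs) hCs) b0 hb.
have c0 : 0 <= (a ^+ 2 + b ^+ 2) / 2 by rewrite divr_ge0 ?addr_ge0 ?sqr_ge0.
have hP := opnorm_le hip c0 (gram_sum_bound hip hBs (adjoint_sym hip hCs) ha hb).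
have hQ := opnorm_le hip c0 (gram_sum_bound hip (adjoint_sym hip hBs) hCs ha' hb').
apply: quarter_max_bound a0 b0 (opnorm_le hip w20 Dp) (opnorm_le hip w20 Dm) _.
by rewrite ge_max hP hQ.
Qed.
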